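(* For a word $w=w_1\cdots w_n$ over $\{1,2,3\}$ let $s(w)=|\{i : 1\le i\le n-2,\ w_{i+2}-w_i=2\}|$. Then for all $n\ge 0$ and $s\ge 0$, the number of words $w\in\{1,2,3\}^{2n}$ with $s(w)=s$ equals $$\sum_{r=0}^{n}\sum_{m=0}^{r}(-1)^{m+r+s}\binom{m+r}{2m}\binom{n-m}{s}9^{m},$$ and the number of words $w\in\{1,2,3\}^{2n+1}$ with $s(w)=s$ equals $$\sum_{r=0}^{n}\sum_{m=0}^{r}(-1)^{m+r+s}\binom{m+r+1}{2m+1}\binom{n-m}{s}3^{2m+1}.$$ *)

From mathcomp Require Import all_boot all_order all_algebra.
Set Implicit Arguments. Unset Strict Implicit. Unset Printing Implicit Defensive.
Import GRing.Theory Num.Theory.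
Local Open Scope ring_scope.

(* A word over {1,2,3} of length L is an L.-tuple of naturals-in-{1,2,3},
   represented as 'I_3 with letter k denoting k+1. *)
Definition letter (k : 'I_3) : int := ((val k).+1)%:Z.

(* w_j (1-based in the paper) is letter (tnth w j') with j' = j-1. *)
Definition wletter (L : nat) (w : L.-tuple 'I_3) (i : nat) : int :=
  letter (nth ord0 w i).

(* s(w) = #{ i : 1 <= i <= L-2, w_{i+2} - w_i = 2 }; with 0-based index
   i ranging over 0 <= i < L - 2. *)
Definition sstat (L : nat) (w : L.-tuple 'I_3) : nat :=
  #|[set i : 'I_L | (i + 2 < L)%N && (wletter w (i + 2) - wletter w i == 2%:Z)]|.

Definition count_s (L s : nat) : nat :=
  #|[set w : L.-tuple 'I_3 | sstat w == s]|.

From mathcomp Require Import all_boot all_order all_algebra ring zify.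
Set Implicit Arguments. Unset Strict Implicit. Unset Printing Implicit Defensive.
Import GRing.Theory.
Local Open Scope ring_scope.

(* Positions i and i+2 have the same parity, so s(w) is the number of adjacent
   factors 13 in the subword of odd positions plus that number in the subword of
   even positions.  Over words of length k the generating polynomial of adjacent
   13's is U_(k+1), where U is the Lucas sequence U_(k+2) = 3 U_(k+1) - (1-x) U_k;
   hence the generating polynomial of s over words of length 2n+d (d = 0, 1) is
   U_(n+1) U_(n+d+1).  The product identity
   U_(n+1) U_(n+d+1) = sum_k (1-x)^(n-k) U_(2k+d+1), the binomial expansion of U
   in powers of p = 3 and -q = x-1, and the coefficients of (1-x)^N then give
   the formula. *)

Section LucasSequence.
Variables (R : comPzRingType) (p q : R).

Fixpoint lucasU k : R :=
  match k with
  | 0 => 0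
  | 1 => 1
  | (k'.+1 as k1).+1 => p * lucasU k1 - q * lucasU k'
  end.

Arguments lucasU : simpl never.

Lemma lucasU0 : lucasU 0 = 0. Proof. by []. Qed.
Lemma lucasU1 : lucasU 1 = 1. Proof. by []. Qed.
Lemma lucasUSS k : lucasU k.+2 = p * lucasU k.+1 - q * lucasU k. Proof. by []. Qed.

Lemma lucasU_add a b :
  lucasU a.+1 * lucasU b.+1 - q * lucasU a * lucasU b = lucasU (a + b).+1.
Proof.
suff H c : (lucasU a.+1 * lucasU c.+1 - q * lucasU a * lucasU c = lucasU (a + c).+1) /\
           (lucasU a.+1 * lucasU c.+2 - q * lucasU a * lucasU c.+1 = lucasU (a + c).+2).
  by case: (H b).
elim: c => [|c [IH1 IH2]].
  rewrite !addn0 lucasU1 lucasU0 (lucasUSS 0) lucasU1 lucasU0.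
  by split; [ring | rewrite (lucasUSS a); ring].
split; rewrite ?addnS //.
by rewrite (lucasUSS (a + c).+1) -IH1 -IH2 (lucasUSS c.+1) !(lucasUSS c); ring.
Qed.

Lemma lucasU_mul_shift n d :
  lucasU n.+1 * lucasU (n + d).+1 = \sum_(k < n.+1) q ^+ (n - k) * lucasU (k.*2 + d).+1.
Proof.
elim: n => [|n IH]; first by rewrite big_ord1 expr0 mul1r.
rewrite big_ord_recr /= subnn expr0 mul1r.
have -> : (n.+1.*2 + d = n.+1 + (n.+1 + d))%N by rewrite addnA addnn.
rewrite -(lucasU_add n.+1 (n.+1 + d)) addSn -mulrA IH mulr_sumr.
have -> : \sum_(k < n.+1) q * (q ^+ (n - k) * lucasU (k.*2 + d).+1) =
          \sum_(k < n.+1) q ^+ (n.+1 - k) * lucasU (k.*2 + d).+1.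
  by apply: eq_bigr => k _; rewrite mulrA -exprS subSn // -ltnS.
by rewrite addrC subrK.
Qed.

Definition lucas_term j i : R := 'C(j - i, i)%:R * p ^+ (j - i.*2) * (- q) ^+ i.

Lemma lucas_term_small j i : (j < i.*2)%N -> lucas_term j i = 0.
Proof. by move=> ltji; rewrite /lucas_term bin_small ?mul0r //; lia. Qed.

Lemma lucas_term0S j : lucas_term j.+1 0 = p * lucas_term j 0.
Proof. by rewrite /lucas_term !subn0 !bin0 exprS; ring. Qed.

Lemma lucas_termSS j i :
  lucas_term j.+2 i.+1 = p * lucas_term j.+1 i.+1 - q * lucas_term j i.
Proof.
rewrite /lucas_term doubleS !subSS.
have [ltji | leij] := ltnP j i.
  by rewrite !bin_small ?mul0r ?mulr0 ?subr0 //; lia.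
have shiftp : 'C(j - i, i.+1)%:R * p ^+ (j - i.*2) =
              p * 'C(j - i, i.+1)%:R * p ^+ (j - i.*2.+1) :> R.
  have [lt2ij | le2ji] := ltnP i.*2 j.
    by rewrite (_ : j - i.*2 = (j - i.*2.+1).+1)%N ?exprS; [ring | lia].
  by rewrite bin_small ?mul0r ?mulr0 ?mul0r //; lia.
rewrite subSn // binS natrD mulrDl mulrDl shiftp exprS; ring.
Qed.

Lemma lucasU_sum j : lucasU j.+1 = \sum_(i < j.+1) lucas_term j i.
Proof.
have extend k : \sum_(i < k.+1) lucas_term k i = \sum_(i < k.+2) lucas_term k i.
  by rewrite [RHS]big_ord_recr /= lucas_term_small ?addr0 //; lia.
suff H k : lucasU k.+1 = \sum_(i < k.+1) lucas_term k i /\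
           lucasU k.+2 = \sum_(i < k.+2) lucas_term k.+1 i by case: (H j).
elim: k => [|k [IH1 IH2]].
  rewrite !big_ord_recl !big_ord0 /lucas_term /bump /= lucasUSS lucasU1 lucasU0.
  by rewrite !subn0 !bin0 bin_small //; split; ring.
split=> //.
rewrite lucasUSS IH1 IH2 (extend k.+1) (extend k) big_ord_recl.
rewrite [RHS]big_ord_recl (lucas_term0S k.+1).
under eq_bigr => i _ do rewrite lift0.
under [in RHS]eq_bigr => i _ do rewrite lift0 lucas_termSS.
by rewrite big_split /= sumrN -!mulr_sumr; ring.
Qed.

Lemma lucasU_half k d : (d <= 1)%N ->
  lucasU (k.*2 + d).+1 =
  \sum_(m < k.+1) 'C(m + k + d, 2 * m + d)%:R * p ^+ (2 * m + d) * (- q) ^+ (k - m).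
Proof.
move=> led1; rewrite lucasU_sum.
rewrite (_ : (k.*2 + d).+1 = k.+1 + (k + d))%N; last by rewrite -addnn; lia.
rewrite big_split_ord /= [X in _ + X]big1 ?addr0; last first.
  by move=> i _; apply: lucas_term_small; rewrite -mul2n; lia.
rewrite (reindex_inj rev_ord_inj); apply: eq_bigr => m _ /=.
have lemk : (m <= k)%N by rewrite -ltnS.
rewrite /lucas_term subSS.
have -> : (k.*2 + d - (k - m) = m + k + d)%N by rewrite -mul2n; lia.
have -> : (k.*2 + d - (k - m).*2 = 2 * m + d)%N by rewrite -!mul2n; lia.
rewrite (_ : k - m = m + k + d - (2 * m + d))%N ?bin_sub //; lia.
Qed.

End LucasSequence.

Arguments lucasU : simpl never.

Lemma coef_1subX_exp (R : nzRingType) N s :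
  ((1 - 'X) ^+ N : {poly R})`_s = (-1) ^+ s *+ 'C(N, s).
Proof.
elim: N s => [|N IH] [|s].
- by rewrite expr0 coef1.
- by rewrite expr0 coef1 bin0n.
- by rewrite exprS mulrBl mul1r coefB coefXM IH subr0 !bin0.
- by rewrite exprS mulrBl mul1r coefB coefXM /= !IH binS mulrnDr exprS mulN1r !mulNrn.
Qed.

Lemma coef_1subX_scale (R : comNzRingType) (c : R) n k m s : (m <= k <= n)%N ->
  ((1 - 'X) ^+ (n - k) * (c%:P * (- (1 - 'X)) ^+ (k - m)))`_s =
  (-1) ^+ (m + k + s) * c *+ 'C(n - m, s).
Proof.
case/andP=> lemk lekn.
have signE : (-1) ^+ (m + k) = (-1) ^+ (k - m) :> R.
  have -> : (m + k = k - m + 2 * m)%N by lia.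
  by rewrite exprD exprM sqrrN !expr1n mulr1.
have scaleC : c%:P * (-1) ^+ (k - m) = (c * (-1) ^+ (k - m))%:P.
  by rewrite polyCM polyC_exp polyCN polyC1.
rewrite exprNn [c%:P * _]mulrA scaleC mulrCA -exprD.
rewrite (_ : n - k + (k - m) = n - m)%N; last by lia.
by rewrite coefCM coef_1subX_exp mulrnAr exprD signE; congr (_ *+ _); ring.
Qed.

Lemma big_tuple_cons (R : Type) (idx : R) (op : Monoid.com_law idx) (T : finType) L
    (F : L.+1.-tuple T -> R) :
  \big[op/idx]_(w : L.+1.-tuple T) F w =
  \big[op/idx]_(x : T) \big[op/idx]_(w : L.-tuple T) F [tuple of x :: w].
Proof.
rewrite pair_bigA (reindex (fun xw : T * L.-tuple T => [tuple of xw.1 :: xw.2])) //=.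
exists (fun w => (thead w, behead_tuple w)) => [[x w] _ | w _].
  by congr (_, _); apply: val_inj.
by rewrite [RHS]tuple_eta.
Qed.

Lemma letter_diff (x y : 'I_3) :
  (letter y - letter x == 2%:Z) = (x == ord0) && (y == ord_max).
Proof. by case: x => [[|[|[|?]]] ?]; case: y => [[|[|[|?]]] ?]. Qed.

Lemma sstat_cons L (x : 'I_3) (w : L.-tuple 'I_3) :
  sstat [tuple of x :: w] = ((x == ord0) && (nth ord0 w 1 == ord_max) + sstat w)%N.
Proof.
rewrite /sstat -!sum1_card big_mkcond [in RHS]big_mkcond big_ord_recl /=.
congr (_ + _)%N.
  rewrite inE /wletter /= letter_diff add0n ltnS.
  case: (x == ord0) => //=; case: leqP => // ltL1.
  by rewrite nth_default ?size_tuple.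
by apply: eq_bigr => i _; rewrite !inE /wletter /= /bump leq0n add1n !add0n addSn ltnS.
Qed.

Definition wordgf L : {poly int} := \sum_(w : L.-tuple 'I_3) 'X^(sstat w).

Lemma count_s_coef L s : (count_s L s)%:Z = (wordgf L)`_s.
Proof.
rewrite /wordgf coef_sum (eq_bigr (fun w => (sstat w == s)%:R)); last first.
  by move=> w _; rewrite coefXn eq_sym.
rewrite -natz -natr_sum /count_s -sum1_card big_mkcond /=.
by congr _%:R; apply: eq_bigr => w _; rewrite inE; case: (_ == _).
Qed.

Definition startgf L (a b : bool) : {poly int} :=
  \sum_(w : L.-tuple 'I_3 | ((nth ord0 w 0 == ord_max) == a) &&
                            ((nth ord0 w 1 == ord_max) == b)) 'X^(sstat w).

Lemma wordgf_startgf L : wordgf L = \sum_(a : bool) \sum_(b : bool) startgf L a b.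
Proof.
rewrite /wordgf /startgf !big_bool /= !(big_mkcond (fun w => _ && _)) -!big_split /=.
by apply: eq_bigr => w _; do 2![case: (_ == ord_max)]; rewrite /= ?addr0 ?add0r.
Qed.

Lemma startgf_cons L c a :
  startgf L.+1 c a =
  \sum_(x : 'I_3 | (x == ord_max) == c) \sum_(b : bool) 'X^((x == ord0) && b) * startgf L a b.
Proof.
rewrite /startgf big_mkcond big_tuple_cons [RHS]big_mkcond; apply: eq_bigr => x _ /=.
case: ((x == ord_max) == c); last by rewrite big1.
rewrite big_bool /= !mulr_sumr !(big_mkcond (fun w => _ && _)) -big_split /=.
apply: eq_bigr => w _; rewrite sstat_cons exprD.
by case: (_ == a); case: (_ == ord_max); rewrite /= ?mulr0 ?addr0 ?add0r ?andbT ?andbF.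
Qed.

Local Notation U := (lucasU (3 : {poly int}) (1 - 'X)).

(* The generating polynomials of adjacent 13's over the words of length k that
   start (b = true), resp. do not start (b = false), with the letter 3. *)
Definition headU (b : bool) k : {poly int} := if b then U k else U k.+1 - U k.

Lemma startgf_closed L a b : startgf L a b = headU a (uphalf L) * headU b L./2.
Proof.
elim: L a b => [|L IH] a b.
  rewrite /startgf big_mkcond (eq_bigr (fun=> (~~ a && ~~ b)%:R)).
    rewrite sumr_const card_tuple expn0 mulr1n /headU lucasU1 lucasU0 subr0.
    by case: a; case: b; rewrite /= ?mulr0 ?mulr1.
  move=> w _; have -> : sstat w = 0%N by apply: eq_card0 => -[].
  by rewrite (tuple0 w); case: a; case: b.
rewrite startgf_cons big_mkcond !big_ord_recl big_ord0 /= !big_bool /= !IH.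
case: a; rewrite /headU /= ?expr0 ?expr1 ?mul1r ?add0r ?addr0; first ring.
by rewrite (lucasUSS _ _ L./2); ring.
Qed.

Lemma wordgf_closed L : wordgf L = U (uphalf L).+1 * U L./2.+1.
Proof.
rewrite wordgf_startgf.
under eq_bigr => a _ do under eq_bigr => b _ do rewrite startgf_closed.
by rewrite !big_bool /headU /=; ring.
Qed.

Lemma count_s_formula n d s : (d <= 1)%N ->
  (count_s (2 * n + d) s)%:Z =
    \sum_(0 <= r < n.+1) \sum_(0 <= m < r.+1)
      (-1) ^+ (m + r + s) * ('C(m + r + d, 2 * m + d) * 'C(n - m, s) * 3 ^ (2 * m + d))%:Z.
Proof.
move=> led1; rewrite count_s_coef wordgf_closed.
have [-> ->] : uphalf (2 * n + d) = (n + d)%N /\ (2 * n + d)./2 = n.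
  case: d led1 => [|[|]] // _; rewrite mul2n ?addn0 ?addn1 /= ?uphalf_double ?doubleK //.
rewrite mulrC lucasU_mul_shift coef_sum big_mkord; apply: eq_bigr => k _.
rewrite lucasU_half // mulr_sumr coef_sum big_mkord; apply: eq_bigr => m _.
set c := ('C(m + k + d, 2 * m + d) * 3 ^ (2 * m + d))%N.
have -> : 'C(m + k + d, 2 * m + d)%:R * 3 ^+ (2 * m + d) = (c%:R : int)%:P.
  by rewrite polyC_natr natrM natrX.
have lemk : (m <= k)%N by rewrite -ltnS.
have lekn : (k <= n)%N by rewrite -ltnS.
rewrite coef_1subX_scale; last by rewrite lemk lekn.
by rewrite -mulrnAr -mulrnA /c mulnAC natz.
Qed.

Theorem mainTheorem4 (n s : nat) :
  (count_s (2 * n) s)%:Z =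
    \sum_(0 <= r < n.+1) \sum_(0 <= m < r.+1)
      (-1) ^+ (m + r + s) * ('C(m + r, 2 * m) * 'C(n - m, s) * 9 ^ m)%:Z
  /\
  (count_s (2 * n).+1 s)%:Z =
    \sum_(0 <= r < n.+1) \sum_(0 <= m < r.+1)
      (-1) ^+ (m + r + s) * ('C(m + r + 1, 2 * m + 1) * 'C(n - m, s) * 3 ^ (2 * m + 1))%:Z.
Proof.
split; last by rewrite -addn1 count_s_formula.
rewrite -[(2 * n)%N]addn0 count_s_formula //.
by apply: eq_bigr => r _; apply: eq_bigr => m _; rewrite !addn0 expnM.
Qed.
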